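(* Let $(A,[\cdot,\cdot],\circ)$ be a Malcev-Poisson algebra and let $\Delta,\delta:A\to A\otimes A$ be linear maps whose duals $\Delta^*,\delta^*$ define a Malcev-Poisson algebra structure on $A^*$ (product $\xi\circ_{A^*}\eta=\Delta^*(\xi\otimes\eta)$, bracket $[\xi,\eta]^*=\delta^*(\xi\otimes\eta)$). Then the following are equivalent: (1) $(A,[\cdot,\cdot],\circ,\Delta,\delta)$ is a Malcev-Poisson bialgebra; (2) $(A,A^*,\mathrm{ad}_A^*,-L^*,\mathrm{ad}_{A^*}^*,-\mathcal{L}_{A^*}^* )$ is a matched pair of Malcev-Poisson algebras; (3) $(A\oplus A^*,A,A^* )$ is a standard Manin triple of Malcev-Poisson algebras with respect to $\omega_d(x+\xi,y+\eta)=\langle x,\eta\rangle+\langle\xi,y\rangle$.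
   Context: All spaces finite-dimensional over an algebraically closed field of characteristic $0$. Malcev algebra: antisymmetric bracket with $J(x,y,[x,z])=[J(x,y,z),x]$, $J(x,y,z)=[[x,y],z]+[[z,x],y]+[[y,z],x]$. Malcev-Poisson algebra: Malcev bracket plus commutative associative product $\circ$ with $[x,y\circ z]=[x,y]\circ z+y\circ[x,z]$. Representations: Malcev, $\varrho([[x,y],z])=\varrho(z)\varrho(y)\varrho(x)-\varrho(y)\varrho(x)\varrho(z)+\varrho(x)\varrho([y,z])+\varrho([x,z])\varrho(y)$; associative, $\mu(x\circ y)=\mu(x)\mu(y)$; Malcev-Poisson, a pair $(\varrho,\mu)$ of these with $\varrho(x\circ y)=\mu(y)\varrho(x)+\mu(x)\varrho(y)$, $\mu([x,y])=\varrho(x)\mu(y)-\mu(y)\varrho(x)$. Notation: $\mathrm{ad}(x)y=[x,y]$, $L(x)y=x\circ y$; for $\theta:A\to\mathrm{End}(V)$, $\langle\theta^*(x)\xi,v\rangle=-\langle\xi,\theta(x)v\rangle$; $\mathrm{ad}_A^*,L^*$ are duals of $\mathrm{ad},L$; $\mathrm{ad}_{A^*}^*,\mathcal{L}_{A^*}^*:A^*\to\mathrm{End}(A)$ are given by $\langle\mathrm{ad}_{A^*}^*(\xi)x,\eta\rangle=-\langle x,[\xi,\eta]^*\rangle$, $\langle\mathcal{L}_{A^*}^*(\xi)x,\eta\rangle=-\langle x,\xi\circ_{A^*}\eta\rangle$. $\tau(x\otimes y)=y\otimes x$, $\sigma(x\otimes y\otimes z\otimes t)=y\otimes z\otimes t\otimes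 x$. Malcev-Poisson bialgebra $(A,[\cdot,\cdot],\circ,\Delta,\delta)$: (a) $(A,[\cdot,\cdot],\circ)$ Malcev-Poisson algebra; (b) $(A,\Delta,\delta)$ Malcev-Poisson coalgebra, i.e. $\tau\Delta=\Delta$, $(\mathrm{id}\otimes\Delta)\Delta=(\Delta\otimes\mathrm{id})\Delta$, $\tau\delta=-\delta$, $(\mathrm{id}\otimes\tau\otimes\mathrm{id})(\delta\otimes\delta)\delta=(\mathrm{id}+\sigma+\sigma^2+\sigma^3)(\delta\otimes\mathrm{id}\otimes\mathrm{id})(\delta\otimes\mathrm{id})\delta$, and $(\mathrm{id}\otimes\Delta)\delta(x)-(\delta\otimes\mathrm{id})\Delta(x)-(\tau\otimes\mathrm{id})(\mathrm{id}\otimes\delta)\Delta(x)=0$; (c) $\Delta(x\circ y)=(L(x)\otimes\mathrm{id})\Delta(y)+(\mathrm{id}\otimes L(y))\Delta(x)$; (d) $(A,[\cdot,\cdot],\delta)$ is a Malcev bialgebra, meaning the Malcev bialgebra compatibility conditions of Vershinin hold, which are equivalent to: $\mathrm{ad}_A^*$, $\mathrm{ad}_{A^*}^*$ being representations and the bracket $[x+\xi,y+\eta]=[x,y]+\mathrm{ad}_{A^*}^*(\xi)y-\mathrm{ad}_{A^*}^*(\eta)x+[\xi,\eta]^*+\mathrm{ad}_A^*(x)\eta-\mathrm{ad}_A^*(y)\xi$ on $A\oplus A^*$ being a Malcev bracket; (e) for all $x,y\in A$: $\delta(x\circ y)+(\mathrm{ad}(y)\otimes\mathrm{id})\Delta(x)-(\mathrm{id}\otimes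 L(x))\delta(y)+(\mathrm{ad}(x)\otimes\mathrm{id})\Delta(y)-(\mathrm{id}\otimes L(y))\delta(x)=0$ and $\Delta([x,y])-(L(y)\otimes\mathrm{id})\delta(x)-(\mathrm{id}\otimes\mathrm{ad}(x))\Delta(y)+(\mathrm{id}\otimes L(y))\delta(x)-(\mathrm{ad}(x)\otimes\mathrm{id})\Delta(y)=0$. Matched pair of Malcev-Poisson algebras $(A_1,A_2,\varrho_1,\mu_1,\varrho_2,\mu_2)$: $\mu_1,\mu_2$ associative representations with $\mu_1(x_1)(x_2\circ_2y_2)=(\mu_1(x_1)x_2)\circ_2y_2+\mu_1(\mu_2(x_2)x_1)y_2$, $\mu_2(x_2)(x_1\circ_1y_1)=(\mu_2(x_2)x_1)\circ_1y_1+\mu_2(\mu_1(x_1)x_2)y_1$; $\varrho_1,\varrho_2$ Malcev representations with $[x_1+x_2,y_1+y_2]=[x_1,y_1]_1+\varrho_2(x_2)y_1-\varrho_2(y_2)x_1+[x_2,y_2]_2+\varrho_1(x_1)y_2-\varrho_1(y_1)x_2$ a Malcev bracket on $A_1\oplus A_2$; $(A_2,\varrho_1,\mu_1)$, $(A_1,\varrho_2,\mu_2)$ Malcev-Poisson representations; and $\varrho_2(x_2)(x_1\circ_1y_1)=(\varrho_2(x_2)x_1)\circ_1y_1+x_1\circ_1(\varrho_2(x_2)y_1)-\mu_2(\varrho_1(x_1)x_2)y_1-\mu_2(\varrho_1(y_1)x_2)x_1$, $\varrho_1(x_1)(x_2\circ_2y_2)=(\varrho_1(x_1)x_2)\circ_2y_2+x_2\circ_2(\varrho_1(x_1)y_2)-\mu_1(\varrho_2(x_2)x_1)y_2-\mu_1(\varrho_2(y_2)x_1)x_2$,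 $[x_1,\mu_2(x_2)y_1]_1-\varrho_2(\mu_1(y_1)x_2)x_1=\mu_2(\varrho_1(x_1)x_2)y_1-(\varrho_2(x_2)x_1)\circ_1y_1+\mu_2(x_2)[x_1,y_1]_1$, $[x_2,\mu_1(x_1)y_2]_2-\varrho_1(\mu_2(y_2)x_1)x_2=\mu_1(\varrho_2(x_2)x_1)y_2-(\varrho_1(x_1)x_2)\circ_2y_2+\mu_1(x_1)[x_2,y_2]_2$. Standard Manin triple: a Malcev-Poisson structure on $A\oplus A^*$ with $A$, $A^*$ as Malcev-Poisson subalgebras and $\omega_d$ invariant: $\omega_d(u\circ v,w)=\omega_d(u,v\circ w)$, $\omega_d([u,v],w)=\omega_d(u,[v,w])$. *)

(* Finite-dimensional spaces are represented in coordinates: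
   A = K^n ('rV[K]_n, basis ev k), A* = K^n with the dual basis, and
   A (x) A, A (x) A (x) A, A^{(x)4} by their coefficient arrays. *)
From HB Require Import structures.
From mathcomp Require Import all_boot all_order all_algebra.
Set Implicit Arguments. Unset Strict Implicit. Unset Printing Implicit Defensive.
Import GRing.Theory.
Local Open Scope ring_scope.

Section Generic.
Variable K : fieldType.

Definition bilinear_op (V : lmodType K) (f : V -> V -> V) :=
  (forall a x y z, f (a *: x + y) z = a *: f x z + f y z) /\
  (forall a x y z, f z (a *: x + y) = a *: f z x + f z y).

Definition jacobiator (V : lmodType K) (br : V -> V -> V) (x y z : V) : V :=
  br (br x y) z + br (br z x) y + br (br y z) x.

Definition is_malcev (V : lmodType K) (br : V -> V -> V) :=
  bilinear_op br /\ (forall x y, br x y = - br y x) /\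
  (forall x y z, jacobiator br x y (br x z) = br (jacobiator br x y z) x).

Definition is_comm_assoc (V : lmodType K) (m : V -> V -> V) :=
  bilinear_op m /\ (forall x y, m x y = m y x) /\
  (forall x y z, m (m x y) z = m x (m y z)).

Definition is_malcev_poisson (V : lmodType K) (br m : V -> V -> V) :=
  is_malcev br /\ is_comm_assoc m /\
  (forall x y z, br x (m y z) = m (br x y) z + m y (br x z)).

Definition is_linear_rep (A V : lmodType K) (r : A -> V -> V) :=
  (forall a x y v, r (a *: x + y) v = a *: r x v + r y v) /\
  (forall x a v w, r x (a *: v + w) = a *: r x v + r x w).

Definition is_malcev_rep (A V : lmodType K) (brA : A -> A -> A) (r : A -> V -> V) :=
  is_linear_rep r /\
  (forall x y z v,
     r (brA (brA x y) z) v =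
       r z (r y (r x v)) - r y (r x (r z v)) + r x (r (brA y z) v)
       + r (brA x z) (r y v)).

Definition is_assoc_rep (A V : lmodType K) (mA : A -> A -> A) (mu : A -> V -> V) :=
  is_linear_rep mu /\ (forall x y v, mu (mA x y) v = mu x (mu y v)).

Definition is_MP_rep (A V : lmodType K) (brA mA : A -> A -> A)
    (r mu : A -> V -> V) :=
  is_malcev_rep brA r /\ is_assoc_rep mA mu /\
  (forall x y v, r (mA x y) v = mu y (r x v) + mu x (r y v)) /\
  (forall x y v, mu (brA x y) v = r x (mu y v) - mu y (r x v)).

Definition mp_bracket (A1 A2 : lmodType K) (br1 : A1 -> A1 -> A1)
    (br2 : A2 -> A2 -> A2) (r1 : A1 -> A2 -> A2) (r2 : A2 -> A1 -> A1)
    (u v : A1 * A2) : A1 * A2 :=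
  (br1 u.1 v.1 + r2 u.2 v.1 - r2 v.2 u.1,
   br2 u.2 v.2 + r1 u.1 v.2 - r1 v.1 u.2).

Definition matched_pair (A1 A2 : lmodType K)
    (br1 m1 : A1 -> A1 -> A1) (br2 m2 : A2 -> A2 -> A2)
    (r1 mu1 : A1 -> A2 -> A2) (r2 mu2 : A2 -> A1 -> A1) :=
  is_assoc_rep m1 mu1 /\ is_assoc_rep m2 mu2 /\
  (forall x1 x2 y2, mu1 x1 (m2 x2 y2) = m2 (mu1 x1 x2) y2 + mu1 (mu2 x2 x1) y2) /\
  (forall x2 x1 y1, mu2 x2 (m1 x1 y1) = m1 (mu2 x2 x1) y1 + mu2 (mu1 x1 x2) y1) /\
  is_malcev_rep br1 r1 /\ is_malcev_rep br2 r2 /\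
  is_malcev (mp_bracket br1 br2 r1 r2) /\
  is_MP_rep br1 m1 r1 mu1 /\ is_MP_rep br2 m2 r2 mu2 /\
  (forall x2 x1 y1, r2 x2 (m1 x1 y1) =
      m1 (r2 x2 x1) y1 + m1 x1 (r2 x2 y1) - mu2 (r1 x1 x2) y1 - mu2 (r1 y1 x2) x1) /\
  (forall x1 x2 y2, r1 x1 (m2 x2 y2) =
      m2 (r1 x1 x2) y2 + m2 x2 (r1 x1 y2) - mu1 (r2 x2 x1) y2 - mu1 (r2 y2 x1) x2) /\
  (forall x1 x2 y1, br1 x1 (mu2 x2 y1) - r2 (mu1 y1 x2) x1 =
      mu2 (r1 x1 x2) y1 - m1 (r2 x2 x1) y1 + mu2 x2 (br1 x1 y1)) /\
  (forall x2 x1 y2, br2 x2 (mu1 x1 y2) - r1 (mu2 y2 x1) x2 =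
      mu1 (r2 x2 x1) y2 - m2 (r1 x1 x2) y2 + mu1 x1 (br2 x2 y2)).

End Generic.

Section Coordinates.
Variable K : fieldType.
Variable n : nat.
Local Notation vec := 'rV[K]_n.

(* basis vector e_k of A (also the dual basis vector of the dual space) *)
Definition ev (k : 'I_n) : vec := delta_mx 0 k.

Definition pairing (x xi : vec) : K := \sum_i x 0 i * xi 0 i.

Definition dual_rep (U : Type) (th : U -> vec -> vec) (a : U) (v : vec) : vec :=
  \row_k (- \sum_i v 0 i * th a (ev k) 0 i).

(* tensors: coefficient arrays w.r.t. e_a (x) e_b (x) ... *)
Definition tensor2 := 'I_n -> 'I_n -> K.
Definition tensor3 := 'I_n -> 'I_n -> 'I_n -> K.
Definition tensor4 := 'I_n -> 'I_n -> 'I_n -> 'I_n -> K.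

(* linear map A -> A (x) A given by D k = image of e_k *)
Definition cop (D : 'I_n -> tensor2) (x : vec) : tensor2 :=
  fun i j => \sum_k x 0 k * D k i j.

Definition dual_op (D : 'I_n -> tensor2) (xi eta : vec) : vec :=
  \row_k \sum_i \sum_j xi 0 i * eta 0 j * D k i j.

(* f (x) id and id (x) f on A (x) A, for f : A -> A *)
Definition map_l (f : vec -> vec) (T : tensor2) : tensor2 :=
  fun a b => \sum_i T i b * f (ev i) 0 a.
Definition map_r (f : vec -> vec) (T : tensor2) : tensor2 :=
  fun a b => \sum_j T a j * f (ev j) 0 b.
(* id (x) D and D (x) id : A (x) A -> A (x) A (x) A *)
Definition id_cop (D : 'I_n -> tensor2) (T : tensor2) : tensor3 :=
  fun a b c => \sum_j T a j * D j b c.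
Definition cop_id (D : 'I_n -> tensor2) (T : tensor2) : tensor3 :=
  fun a b c => \sum_i T i c * D i a b.
Definition tau_id (T : tensor3) : tensor3 := fun a b c => T b a c.
Definition cop_cop (D : 'I_n -> tensor2) (T : tensor2) : tensor4 :=
  fun a b c d => \sum_i \sum_j T i j * D i a b * D j c d.
Definition cop_id_id (D : 'I_n -> tensor2) (T : tensor3) : tensor4 :=
  fun a b c d => \sum_i T i c d * D i a b.
Definition id_tau_id (T : tensor4) : tensor4 := fun a b c d => T a c b d.
(* sigma (x (x) y (x) z (x) t) = y (x) z (x) t (x) x *)
Definition sigma4 (T : tensor4) : tensor4 := fun a b c d => T d a b c.

Definition MP_coalgebra (Dl Dt : 'I_n -> tensor2) :=
  (forall x a b, cop Dl x b a = cop Dl x a b) /\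
  (forall x a b c, id_cop Dl (cop Dl x) a b c = cop_id Dl (cop Dl x) a b c) /\
  (forall x a b, cop Dt x b a = - cop Dt x a b) /\
  (forall x a b c d,
     let T := cop_id_id Dt (cop_id Dt (cop Dt x)) in
     id_tau_id (cop_cop Dt (cop Dt x)) a b c d =
       T a b c d + sigma4 T a b c d + sigma4 (sigma4 T) a b c d
       + sigma4 (sigma4 (sigma4 T)) a b c d) /\
  (forall x a b c,
     id_cop Dl (cop Dt x) a b c - cop_id Dt (cop Dl x) a b c
     - tau_id (id_cop Dt (cop Dl x)) a b c = 0).

Definition MP_bialgebra (br m : vec -> vec -> vec) (Dl Dt : 'I_n -> tensor2) :=
  is_malcev_poisson br m /\
  MP_coalgebra Dl Dt /\
  (forall x y a b,
     cop Dl (m x y) a b = map_l (m x) (cop Dl y) a b + map_r (m y) (cop Dl x) a b) /\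
  (is_malcev_rep br (dual_rep br) /\
   is_malcev_rep (dual_op Dt) (dual_rep (dual_op Dt)) /\
   is_malcev (mp_bracket br (dual_op Dt) (dual_rep br) (dual_rep (dual_op Dt)))) /\
  (forall x y a b,
     cop Dt (m x y) a b + map_l (br y) (cop Dl x) a b - map_r (m x) (cop Dt y) a b
     + map_l (br x) (cop Dl y) a b - map_r (m y) (cop Dt x) a b = 0) /\
  (forall x y a b,
     cop Dl (br x y) a b - map_l (m y) (cop Dt x) a b - map_r (br x) (cop Dl y) a b
     + map_r (m y) (cop Dt x) a b - map_l (br x) (cop Dl y) a b = 0).

Definition omega_d (u v : vec * vec) : K := pairing u.1 v.2 + pairing v.1 u.2.

Definition std_Manin_triple (br m brd md : vec -> vec -> vec) :=
  exists B P : vec * vec -> vec * vec -> vec * vec,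
    is_malcev_poisson B P /\
    (forall x y, B (x, 0) (y, 0) = (br x y, 0)) /\
    (forall x y, P (x, 0) (y, 0) = (m x y, 0)) /\
    (forall xi eta, B (0, xi) (0, eta) = (0, brd xi eta)) /\
    (forall xi eta, P (0, xi) (0, eta) = (0, md xi eta)) /\
    (forall u v w, omega_d (P u v) w = omega_d u (P v w)) /\
    (forall u v w, omega_d (B u v) w = omega_d u (B v w)).

End Coordinates.

(* For the coadjoint actions
   ad^*, -L^* of A on A^* and ad_{A^*}^*, -L_{A^*}^* of A^* on A, the
   representation axioms and the coalgebra axioms are automatic: in
   characteristic <> 2 every Malcev algebra satisfies Sagle's identity, and both
   the Malcev-representation property of ad^* and the co-Malcev axiom of delta
   are dual to it.  Each remaining matched-pair identity, paired with a test
   vector, is one of three quadrilinear forms on A x A x A^* x A^*, and the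
   bialgebra axioms (c) and (e) are the same forms read as tensors.
   For an arbitrary matched pair, the Leibniz and associativity defects of the
   bicrossed product on A1 (+) A2 are trilinear; on homogeneous triples every
   component is a combination of matched-pair defects, and the symmetry
   A1 <-> A2 reduces the eight homogeneous cases to the four with first entry
   in A1.  Finally, invariance of omega_d determines the mixed brackets and
   products, so a standard Manin triple on A (+) A^* can only be this bicrossed
   product. *)
From HB Require Import structures.
From mathcomp Require Import all_boot all_order all_algebra.
From mathcomp Require Import ring.
From Stdlib Require Import FunctionalExtensionality.
Set Implicit Arguments. Unset Strict Implicit. Unset Printing Implicit Defensive.
Import GRing.Theory.
Local Open Scope ring_scope.

Section LinearRep.
Variables (K : fieldType) (U V : lmodType K) (r : U -> V -> V).
Hypothesis Hr : is_linear_rep r.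

Lemma repDl x y v : r (x + y) v = r x v + r y v.
Proof. by have := (proj1 Hr) 1 x y v; rewrite !scale1r. Qed.
Lemma repDr x v w : r x (v + w) = r x v + r x w.
Proof. by have := (proj2 Hr) x 1 v w; rewrite !scale1r. Qed.
Lemma rep0l v : r 0 v = 0.
Proof. by apply: (@addrI _ (r 0 v)); rewrite -repDl !addr0. Qed.
Lemma rep0r x : r x 0 = 0.
Proof. by apply: (@addrI _ (r x 0)); rewrite -repDr !addr0. Qed.
Lemma repZl a x v : r (a *: x) v = a *: r x v.
Proof. by have := (proj1 Hr) a x 0 v; rewrite !addr0 rep0l addr0. Qed.
Lemma repZr a x v : r x (a *: v) = a *: r x v.
Proof. by have := (proj2 Hr) x a v 0; rewrite !addr0 rep0r addr0. Qed.
Lemma repNl x v : r (- x) v = - r x v.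
Proof. by rewrite -scaleN1r repZl scaleN1r. Qed.
Lemma repNr x v : r x (- v) = - r x v.
Proof. by rewrite -scaleN1r repZr scaleN1r. Qed.

Definition repE := (repDl, repDr, rep0l, rep0r, repNl, repNr, repZl, repZr).
End LinearRep.

Lemma linear_rep_oppr (K : fieldType) (U V : lmodType K) (r : U -> V -> V) :
  is_linear_rep r -> is_linear_rep (fun x v => - r x v).
Proof. by move=> Hr; split=> *; rewrite !(repE Hr) opprD scalerN. Qed.

Section Bilinear.
Variables (K : fieldType) (V : lmodType K) (f : V -> V -> V).

Lemma bilinear_linearl z : bilinear_op f -> linear (f ^~ z).
Proof. by case=> hl _ a u v; apply: hl. Qed.
Lemma bilinear_linearr z : bilinear_op f -> linear (f z).
Proof. by case=> _ hr a u v; apply: hr. Qed.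
Lemma bilinear_linear_rep : bilinear_op f -> is_linear_rep f.
Proof. by case=> hl hr; split=> // x a v w; apply: hr. Qed.
Lemma linear_rep_bilinear : is_linear_rep f -> bilinear_op f.
Proof. by case=> hl hr; split=> // a x y z; apply: hr. Qed.
End Bilinear.

Section MalcevPoissonAxioms.
Variables (K : fieldType) (V : lmodType K) (br m : V -> V -> V).
Hypothesis H : is_malcev_poisson br m.

Lemma mp_malcev : is_malcev br. Proof. by case: H. Qed.
Lemma mp_br_rep : is_linear_rep br. Proof. by case: H => [[/bilinear_linear_rep]]. Qed.
Lemma mp_brC x y : br x y = - br y x. Proof. by case: H => [[_ []]]. Qed.
Lemma mp_mul_rep : is_linear_rep m. Proof. by case: H => _ [[/bilinear_linear_rep]]. Qed.
Lemma mp_mulC x y : m x y = m y x. Proof. by case: H => [_ [[_ []]]]. Qed.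
Lemma mp_mulA x y z : m (m x y) z = m x (m y z). Proof. by case: H => [_ [[_ []]]]. Qed.
Lemma mp_leibniz x y z : br x (m y z) = m (br x y) z + m y (br x z).
Proof. by case: H => [_ []]. Qed.

Lemma mp_br_mull x y z : br (m x y) z = br x (m y z) + br y (m x z).
Proof.
have hm := mp_mul_rep.
rewrite !mp_leibniz (mp_brC (m x y)) mp_leibniz (mp_brC x z) (mp_brC y z) (mp_brC y x).
by rewrite !(repNl hm, repNr hm) (mp_mulC y) addrACA subrr add0r opprD.
Qed.
End MalcevPoissonAxioms.

Section Defects.
Variables U V : zmodType.

Definition leibniz_defect (br m : V -> V -> V) x y z :=
  br x (m y z) - (m (br x y) z + m y (br x z)).
Definition assoc_defect (m : V -> V -> V) x y z := m (m x y) z - m x (m y z).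
Definition assoc_rep_defect (mU : U -> U -> U) (mu : U -> V -> V) x y v :=
  mu (mU x y) v - mu x (mu y v).
Definition rep_mul_defect (mU : U -> U -> U) (r mu : U -> V -> V) x y v :=
  r (mU x y) v - (mu y (r x v) + mu x (r y v)).
Definition rep_br_defect (brU : U -> U -> U) (r mu : U -> V -> V) x y v :=
  mu (brU x y) v - (r x (mu y v) - mu y (r x v)).
Definition mu_mul_defect (mV : V -> V -> V) (mu : U -> V -> V) (nu : V -> U -> U) x y z :=
  mu x (mV y z) - (mV (mu x y) z + mu (nu y x) z).
Definition r_mul_defect (mV : V -> V -> V) (r mu : U -> V -> V) (s : V -> U -> U) x y z :=
  r x (mV y z) - (mV (r x y) z + mV y (r x z) - mu (s y x) z - mu (s z x) y).
Definition br_mu_defect (brU mU : U -> U -> U) (r mu : U -> V -> V) (s nu : V -> U -> U)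
    x xi y :=
  brU x (nu xi y) - s (mu y xi) x - (nu (r x xi) y - mU (s xi x) y + nu xi (brU x y)).

Lemma subrDD (a a' b b' : V) : (a + a') - (b + b') = (a - b) + (a' - b').
Proof. by rewrite opprD addrACA. Qed.
Lemma subrDDD (a a' b b' c c' : V) :
  (a + a') - ((b + b') + (c + c')) = (a - (b + c)) + (a' - (b' + c')).
Proof. by rewrite addrACA subrDD. Qed.
End Defects.

Section VanishingDefects.
Variables (K : fieldType) (U V : lmodType K).

Lemma leibniz_defect0 (br m : V -> V -> V) : is_malcev_poisson br m ->
  forall x y z, leibniz_defect br m x y z = 0.
Proof. by move=> H x y z; rewrite /leibniz_defect (mp_leibniz H) subrr. Qed.

Lemma assoc_defect0 (br m : V -> V -> V) : is_malcev_poisson br m ->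
  forall x y z, assoc_defect m x y z = 0.
Proof. by move=> H x y z; rewrite /assoc_defect (mp_mulA H) subrr. Qed.

Variables (brU mU : U -> U -> U) (r mu : U -> V -> V).
Hypothesis HR : is_MP_rep brU mU r mu.

Lemma MP_rep_linear_r : is_linear_rep r. Proof. by case: HR => [[]]. Qed.
Lemma MP_rep_linear_mu : is_linear_rep mu. Proof. by case: HR => _ [[]]. Qed.

Lemma assoc_rep_defect0 x y v : assoc_rep_defect mU mu x y v = 0.
Proof. by rewrite /assoc_rep_defect; case: HR => _ [[_ ->] _]; rewrite subrr. Qed.
Lemma rep_mul_defect0 x y v : rep_mul_defect mU r mu x y v = 0.
Proof. by rewrite /rep_mul_defect; case: HR => _ [_ [-> _]]; rewrite subrr. Qed.
Lemma rep_br_defect0 x y v : rep_br_defect brU r mu x y v = 0.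
Proof. by rewrite /rep_br_defect; case: HR => _ [_ [_ ->]]; rewrite subrr. Qed.
End VanishingDefects.

Section DefectAdditivity.
Variables (K : fieldType) (V : lmodType K) (br m : V -> V -> V).
Hypotheses (Hb : is_linear_rep br) (Hm : is_linear_rep m).

Lemma leibniz_defectDl x x' y z :
  leibniz_defect br m (x + x') y z = leibniz_defect br m x y z + leibniz_defect br m x' y z.
Proof. by rewrite /leibniz_defect !(repE Hb, repE Hm) subrDDD. Qed.
Lemma leibniz_defectDm x y y' z :
  leibniz_defect br m x (y + y') z = leibniz_defect br m x y z + leibniz_defect br m x y' z.
Proof. by rewrite /leibniz_defect !(repE Hb, repE Hm) subrDDD. Qed.
Lemma leibniz_defectDr x y z z' :
  leibniz_defect br m x y (z + z') = leibniz_defect br m x y z + leibniz_defect br m x y z'.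
Proof. by rewrite /leibniz_defect !(repE Hb, repE Hm) subrDDD. Qed.
Lemma assoc_defectDl x x' y z :
  assoc_defect m (x + x') y z = assoc_defect m x y z + assoc_defect m x' y z.
Proof. by rewrite /assoc_defect !(repE Hm) subrDD. Qed.
Lemma assoc_defectDm x y y' z :
  assoc_defect m x (y + y') z = assoc_defect m x y z + assoc_defect m x y' z.
Proof. by rewrite /assoc_defect !(repE Hm) subrDD. Qed.
Lemma assoc_defectDr x y z z' :
  assoc_defect m x y (z + z') = assoc_defect m x y z + assoc_defect m x y z'.
Proof. by rewrite /assoc_defect !(repE Hm) subrDD. Qed.
End DefectAdditivity.

Definition mp_product (A1 A2 : zmodType) (m1 : A1 -> A1 -> A1) (m2 : A2 -> A2 -> A2)
    (mu1 : A1 -> A2 -> A2) (mu2 : A2 -> A1 -> A1) (u v : A1 * A2) : A1 * A2 :=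
  (m1 u.1 v.1 + mu2 u.2 v.1 + mu2 v.2 u.1, m2 u.2 v.2 + mu1 u.1 v.2 + mu1 v.1 u.2).

Definition actions_compat (A1 A2 : zmodType) (br1 m1 : A1 -> A1 -> A1) (m2 : A2 -> A2 -> A2)
    (r1 mu1 : A1 -> A2 -> A2) (r2 mu2 : A2 -> A1 -> A1) :=
  [/\ forall x1 x2 y2, mu_mul_defect m2 mu1 mu2 x1 x2 y2 = 0,
      forall x1 x2 y2, r_mul_defect m2 r1 mu1 r2 x1 x2 y2 = 0 &
      forall x1 x2 y1, br_mu_defect br1 m1 r1 mu1 r2 mu2 x1 x2 y1 = 0].

Definition matched_compat (A1 A2 : zmodType) (br1 m1 : A1 -> A1 -> A1) (br2 m2 : A2 -> A2 -> A2)
    (r1 mu1 : A1 -> A2 -> A2) (r2 mu2 : A2 -> A1 -> A1) :=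
  actions_compat br1 m1 m2 r1 mu1 r2 mu2 /\ actions_compat br2 m2 m1 r2 mu2 r1 mu1.

Lemma pair_zero (A1 A2 : zmodType) : (0, 0) = 0 :> A1 * A2.
Proof. by []. Qed.

Lemma pair_split (A1 A2 : zmodType) (u : A1 * A2) : u = (u.1, 0) + (0, u.2).
Proof. by case: u => a b; congr pair; rewrite /= ?addr0 ?add0r. Qed.

Section MatchedPairDouble.
Variables (K : fieldType) (p q : nat).
Local Notation A1 := 'rV[K]_p.
Local Notation A2 := 'rV[K]_q.
Variables (br1 m1 : A1 -> A1 -> A1) (br2 m2 : A2 -> A2 -> A2).
Variables (r1 mu1 : A1 -> A2 -> A2) (r2 mu2 : A2 -> A1 -> A1).
Hypotheses (HA1 : is_malcev_poisson br1 m1) (HA2 : is_malcev_poisson br2 m2).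
Hypotheses (HR1 : is_MP_rep br1 m1 r1 mu1) (HR2 : is_MP_rep br2 m2 r2 mu2).
Local Notation B := (mp_bracket br1 br2 r1 r2).
Local Notation P := (mp_product m1 m2 mu1 mu2).

Let Lb1 := mp_br_rep HA1.
Let Lm1 := mp_mul_rep HA1.
Let Lb2 := mp_br_rep HA2.
Let Lm2 := mp_mul_rep HA2.
Let Lr1 := MP_rep_linear_r HR1.
Let Lmu1 := MP_rep_linear_mu HR1.
Let Lr2 := MP_rep_linear_r HR2.
Let Lmu2 := MP_rep_linear_mu HR2.

Local Ltac double_expand :=
  rewrite /leibniz_defect /assoc_defect /mp_bracket /mp_product /assoc_rep_defect
    /rep_mul_defect /rep_br_defect /mu_mul_defect /r_mul_defect /br_mu_defect /=;
  rewrite ?(repE Lb1, repE Lm1, repE Lb2, repE Lm2, repE Lr1, repE Lmu1, repE Lr2, repE Lmu2,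
    oppr0, opprK, opprD, addr0, add0r, subr0, sub0r);
  (* ring does not know that m1, m2 commute: put action terms on the right *)
  rewrite ?(mp_mulC HA1 (mu2 _ _), mp_mulC HA1 (r2 _ _), mp_mulC HA2 (mu1 _ _),
    mp_mulC HA2 (r1 _ _)).

Local Ltac double_ring :=
  apply: injective_projections => /=; apply/rowP => j; rewrite !mxE; ring.

Lemma leibniz_double_A1A1A1 x y z :
  leibniz_defect B P (x, 0) (y, 0) (z, 0) = (leibniz_defect br1 m1 x y z, 0).
Proof. by double_expand; double_ring. Qed.

Lemma leibniz_double_A1A1A2 x y z :
  leibniz_defect B P (x, 0) (y, 0) (0, z)
  = (br_mu_defect br1 m1 r1 mu1 r2 mu2 x z y, - rep_br_defect br1 r1 mu1 x y z).
Proof. by double_expand; double_ring. Qed.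

Lemma leibniz_double_A1A2A1 x y z :
  leibniz_defect B P (x, 0) (0, y) (z, 0)
  = (br_mu_defect br1 m1 r1 mu1 r2 mu2 x y z, - rep_br_defect br1 r1 mu1 x z y).
Proof. by double_expand; double_ring. Qed.

Lemma leibniz_double_A1A2A2 x y z :
  leibniz_defect B P (x, 0) (0, y) (0, z)
  = (- rep_mul_defect m2 r2 mu2 y z x, r_mul_defect m2 r1 mu1 r2 x y z).
Proof. by double_expand; double_ring. Qed.

Lemma assoc_double_A1A1A1 x y z :
  assoc_defect P (x, 0) (y, 0) (z, 0) = (assoc_defect m1 x y z, 0).
Proof. by double_expand; double_ring. Qed.

Lemma assoc_double_A1A1A2 x y z :
  assoc_defect P (x, 0) (y, 0) (0, z)
  = (mu_mul_defect m1 mu2 mu1 z y x, assoc_rep_defect m1 mu1 x y z).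
Proof. by double_expand; rewrite (mp_mulC HA1 y x); double_ring. Qed.

Lemma assoc_double_A1A2A1 x y z :
  assoc_defect P (x, 0) (0, y) (z, 0)
  = (mu_mul_defect m1 mu2 mu1 y z x - mu_mul_defect m1 mu2 mu1 y x z,
     assoc_rep_defect m1 mu1 x z y - assoc_rep_defect m1 mu1 z x y).
Proof. by double_expand; rewrite (mp_mulC HA1 z x); double_ring. Qed.

Lemma assoc_double_A1A2A2 x y z :
  assoc_defect P (x, 0) (0, y) (0, z)
  = (- assoc_rep_defect m2 mu2 z y x, - mu_mul_defect m2 mu1 mu2 x y z).
Proof. by double_expand; rewrite (mp_mulC HA2 z y); double_ring. Qed.

Lemma mp_bracket_linear : is_linear_rep B.
Proof. by split=> *; double_expand; double_ring. Qed.

Lemma mp_product_linear : is_linear_rep P.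
Proof. by split=> *; double_expand; double_ring. Qed.

Lemma actions_compat_of_double :
  (forall u v w, leibniz_defect B P u v w = 0) -> (forall u v w, assoc_defect P u v w = 0) ->
  actions_compat br1 m1 m2 r1 mu1 r2 mu2.
Proof.
move=> hL hA; split=> x y z.
- move: (assoc_double_A1A2A2 x y z); rewrite hA (assoc_rep_defect0 HR2) oppr0.
  by move=> /(congr1 snd) /esym /eqP; rewrite oppr_eq0 => /eqP.
- by move: (leibniz_double_A1A2A2 x y z); rewrite hL => /(congr1 snd).
- by move: (leibniz_double_A1A2A1 x y z); rewrite hL => /(congr1 fst).
Qed.

Hypothesis C : matched_compat br1 m1 br2 m2 r1 mu1 r2 mu2.

Lemma leibniz_double_A1 x v w : leibniz_defect B P (x, 0) v w = 0.
Proof.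
have [[_ Cr Cb] _] := C; have LB := mp_bracket_linear; have LP := mp_product_linear.
rewrite (pair_split v) (pair_split w) !(leibniz_defectDm LB LP, leibniz_defectDr LB LP).
rewrite leibniz_double_A1A1A1 leibniz_double_A1A1A2 leibniz_double_A1A2A1 leibniz_double_A1A2A2.
rewrite !(Cr, Cb, leibniz_defect0 HA1, rep_br_defect0 HR1, rep_mul_defect0 HR2).
by rewrite !oppr0 !pair_zero !addr0.
Qed.

Lemma assoc_double_A1 x v w : assoc_defect P (x, 0) v w = 0.
Proof.
have [[Cm _ _] [Cm' _ _]] := C; have LP := mp_product_linear.
rewrite (pair_split v) (pair_split w) !(assoc_defectDm LP, assoc_defectDr LP).
rewrite assoc_double_A1A1A1 assoc_double_A1A1A2 assoc_double_A1A2A1 assoc_double_A1A2A2.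
rewrite !(Cm, Cm', assoc_defect0 HA1, assoc_rep_defect0 HR1, assoc_rep_defect0 HR2).
by rewrite !(subrr, oppr0) !pair_zero !addr0.
Qed.
End MatchedPairDouble.

Section MatchedPairSymmetry.
Variables (K : fieldType) (p q : nat).
Local Notation A1 := 'rV[K]_p.
Local Notation A2 := 'rV[K]_q.
Variables (br1 m1 : A1 -> A1 -> A1) (br2 m2 : A2 -> A2 -> A2).
Variables (r1 mu1 : A1 -> A2 -> A2) (r2 mu2 : A2 -> A1 -> A1).
Hypotheses (HA1 : is_malcev_poisson br1 m1) (HA2 : is_malcev_poisson br2 m2).
Hypotheses (HR1 : is_MP_rep br1 m1 r1 mu1) (HR2 : is_MP_rep br2 m2 r2 mu2).
Local Notation B := (mp_bracket br1 br2 r1 r2).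
Local Notation P := (mp_product m1 m2 mu1 mu2).
Local Notation B' := (mp_bracket br2 br1 r2 r1).
Local Notation P' := (mp_product m2 m1 mu2 mu1).

Lemma leibniz_defect_swap u v w : leibniz_defect B P u v w
  = swap_pair (leibniz_defect B' P' (swap_pair u) (swap_pair v) (swap_pair w)).
Proof. by []. Qed.

Lemma assoc_defect_swap u v w :
  assoc_defect P u v w = swap_pair (assoc_defect P' (swap_pair u) (swap_pair v) (swap_pair w)).
Proof. by []. Qed.

Lemma matched_compat_swap :
  matched_compat br1 m1 br2 m2 r1 mu1 r2 mu2 -> matched_compat br2 m2 br1 m1 r2 mu2 r1 mu1.
Proof. by case. Qed.

Lemma leibniz_double : matched_compat br1 m1 br2 m2 r1 mu1 r2 mu2 ->
  forall u v w, leibniz_defect B P u v w = 0.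
Proof.
move=> C u v w; rewrite (pair_split u) (leibniz_defectDl (mp_bracket_linear HA1 HA2 HR1 HR2)
  (mp_product_linear HA1 HA2 HR1 HR2)) (leibniz_double_A1 HA1 HA2 HR1 HR2 C) add0r.
by rewrite leibniz_defect_swap (leibniz_double_A1 HA2 HA1 HR2 HR1 (matched_compat_swap C)).
Qed.

Lemma assoc_double : matched_compat br1 m1 br2 m2 r1 mu1 r2 mu2 ->
  forall u v w, assoc_defect P u v w = 0.
Proof.
move=> C u v w; rewrite (pair_split u) (assoc_defectDl (mp_product_linear HA1 HA2 HR1 HR2))
  (assoc_double_A1 HA1 HA2 HR1 HR2 C) add0r.
by rewrite assoc_defect_swap (assoc_double_A1 HA2 HA1 HR2 HR1 (matched_compat_swap C)).
Qed.

Lemma matched_compat_of_double :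
  (forall u v w, leibniz_defect B P u v w = 0) -> (forall u v w, assoc_defect P u v w = 0) ->
  matched_compat br1 m1 br2 m2 r1 mu1 r2 mu2.
Proof.
move=> hL hA; split; first exact: (actions_compat_of_double HA1 HA2 HR1 HR2).
apply: (actions_compat_of_double HA2 HA1 HR2 HR1) => u v w.
- exact: (congr1 swap_pair (hL (swap_pair u) (swap_pair v) (swap_pair w))).
- exact: (congr1 swap_pair (hA (swap_pair u) (swap_pair v) (swap_pair w))).
Qed.

Lemma mp_productC u v : P u v = P v u.
Proof.
by apply: injective_projections => /=; rewrite ?(mp_mulC HA1 u.1, mp_mulC HA2 u.2) addrAC.
Qed.

Lemma double_MPE :
  is_malcev_poisson B P <-> matched_compat br1 m1 br2 m2 r1 mu1 r2 mu2 /\ is_malcev B.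
Proof.
split=> [H | [C hB]].
  by split; [apply: matched_compat_of_double; [exact: leibniz_defect0 H|exact: assoc_defect0 H] |
    exact: mp_malcev H].
split=> //; split; last by move=> u v w; apply/subr0_eq/(leibniz_double C).
split; first exact/linear_rep_bilinear/(mp_product_linear HA1 HA2 HR1 HR2).
by split; [exact: mp_productC | move=> u v w; apply/subr0_eq/(assoc_double C)].
Qed.
End MatchedPairSymmetry.

Lemma matched_pairE (K : fieldType) (A1 A2 : lmodType K) (br1 m1 : A1 -> A1 -> A1)
    (br2 m2 : A2 -> A2 -> A2) (r1 mu1 : A1 -> A2 -> A2) (r2 mu2 : A2 -> A1 -> A1) :
  is_MP_rep br1 m1 r1 mu1 -> is_MP_rep br2 m2 r2 mu2 ->
  matched_pair br1 m1 br2 m2 r1 mu1 r2 mu2 <->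
  matched_compat br1 m1 br2 m2 r1 mu1 r2 mu2 /\ is_malcev (mp_bracket br1 br2 r1 r2).
Proof.
move=> HR1 HR2; split.
  case=> _ [_ [c3 [c4 [_ [_ [hB [_ [_ [c10 [c11 [c12 c13]]]]]]]]]]].
  split=> //; split; split=> *.
  - by rewrite /mu_mul_defect c3 subrr.
  - by rewrite /r_mul_defect c11 subrr.
  - by rewrite /br_mu_defect c12 subrr.
  - by rewrite /mu_mul_defect c4 subrr.
  - by rewrite /r_mul_defect c10 subrr.
  - by rewrite /br_mu_defect c13 subrr.
case=> [[[c3 c11 c12] [c4 c10 c13]] hB].
have [[mr1 [ar1 _]] [mr2 [ar2 _]]] := (HR1, HR2).
by do ![split=> //]; move=> *; apply/subr0_eq;
  [apply: c3 | apply: c4 | apply: c10 | apply: c11 | apply: c12 | apply: c13].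
Qed.

Lemma eq_lincomb3 (K : fieldType) (V : lmodType K) (k k1 k2 k3 : K) (a b c d e f g h : V) :
  k != 0 -> k *: (g - h) = k1 *: (a - b) + k2 *: (c - d) + k3 *: (e - f) ->
  a = b -> c = d -> e = f -> g = h.
Proof.
move=> k_neq0 + ab cd ef; rewrite ab cd ef !subrr !scaler0 !addr0 => /eqP.
by rewrite scaler_eq0 (negbTE k_neq0) subr_eq0 => /eqP.
Qed.

Section MalcevIdentities.
Variables (K : fieldType) (n : nat) (br : 'rV[K]_n -> 'rV[K]_n -> 'rV[K]_n).
Hypothesis Hmal : is_malcev br.

Let Hr : is_linear_rep br. Proof. by case: Hmal => /bilinear_linear_rep. Qed.
Let brC x y : br x y = - br y x. Proof. by case: Hmal => _ []. Qed.

Lemma malcev_linearized x w y z :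
  jacobiator br x y (br w z) + jacobiator br w y (br x z)
  = br (jacobiator br x y z) w + br (jacobiator br w y z) x.
Proof.
have [_ [_ Hm]] := Hmal.
move: (Hm x y z) (Hm w y z) (Hm (x + w) y z); rewrite /jacobiator !(repDl Hr, repDr Hr).
move=> e1 e2 e3; apply: (eq_lincomb3 (k1 := 1) (k2 := -1) (k3 := -1) (oner_neq0 _) _ e3 e1 e2).
by apply/rowP => j; rewrite !mxE; ring.
Qed.

Hypothesis two_neq0 : (2%:R : K) != 0.

(* Normal form of bracket monomials in x, y, z, t: inner pairs ordered as
   x < y < z < t, and a lone variable always in the right argument. *)
Local Ltac normalize x y z t :=
  rewrite ?(brC x (br _ _), brC y (br _ _), brC z (br _ _), brC t (br _ _),
    brC y x, brC z x, brC t x, brC z y, brC t y, brC t z,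
    brC (br z t) (br x y), brC (br y t) (br x z), brC (br y z) (br x t),
    repNl Hr, repNr Hr, opprK).

Lemma malcev_sagle x y z t : br (br x z) (br y t) = br (br (br x y) z) t
   + br (br (br y z) t) x + br (br (br z t) x) y + br (br (br t x) y) z.
Proof.
(* twice the identity is an alternating sum of three linearized Malcev identities *)
move: (malcev_linearized x y z t) (malcev_linearized x z t y) (malcev_linearized x t y z).
rewrite /jacobiator !(repDl Hr, repDr Hr); normalize x y z t.
move=> e1 e2 e3; apply: (eq_lincomb3 (k1 := 1) (k2 := -1) (k3 := 1) two_neq0 _ e1 e2 e3).
by apply/rowP => j; rewrite !mxE; ring.
Qed.

Lemma malcev_coadjoint x y z t : br (br (br x y) z) t = br x (br y (br z t))
   - br z (br x (br y t)) - br (br y z) (br x t) - br y (br (br x z) t).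
Proof.
rewrite (malcev_sagle y x z t); normalize x y z t.
by apply/rowP => j; rewrite !mxE; ring.
Qed.
End MalcevIdentities.

Section Pairing.
Variables (K : fieldType) (n : nat).
Local Notation V := 'rV[K]_n.
Local Notation e := (@ev K n).

Lemma evE k i : e k 0 i = (k == i)%:R.
Proof. by rewrite /ev mxE eqxx eq_sym. Qed.

Lemma sum_evl (F : 'I_n -> K) k : \sum_i e k 0 i * F i = F k.
Proof.
rewrite (bigD1 k) //= evE eqxx mul1r big1 ?addr0 // => i ik.
by rewrite evE eq_sym (negbTE ik) mul0r.
Qed.

Lemma pairingC (x y : V) : pairing x y = pairing y x.
Proof. by apply: eq_bigr => i _; rewrite mulrC. Qed.

Lemma pairing_evl (x : V) k : pairing (e k) x = x 0 k.
Proof. exact: sum_evl. Qed.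
Lemma pairing_evr (x : V) k : pairing x (e k) = x 0 k.
Proof. by rewrite pairingC pairing_evl. Qed.

Lemma pairingDl (x y z : V) : pairing (x + y) z = pairing x z + pairing y z.
Proof. by rewrite /pairing -big_split; apply: eq_bigr => i _; rewrite mxE mulrDl. Qed.
Lemma pairingZl a (x z : V) : pairing (a *: x) z = a * pairing x z.
Proof. by rewrite /pairing mulr_sumr; apply: eq_bigr => i _; rewrite mxE mulrA. Qed.
Lemma pairingNl (x z : V) : pairing (- x) z = - pairing x z.
Proof. by rewrite -scaleN1r pairingZl mulN1r. Qed.
Lemma pairingBl (x y z : V) : pairing (x - y) z = pairing x z - pairing y z.
Proof. by rewrite pairingDl pairingNl. Qed.
Lemma pairing0l (z : V) : pairing 0 z = 0.
Proof. by rewrite -(scale0r 0) pairingZl mul0r. Qed.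

Lemma pairingDr (x y z : V) : pairing z (x + y) = pairing z x + pairing z y.
Proof. by rewrite pairingC pairingDl !(pairingC z). Qed.
Lemma pairingZr a (x z : V) : pairing z (a *: x) = a * pairing z x.
Proof. by rewrite pairingC pairingZl pairingC. Qed.
Lemma pairingNr (x z : V) : pairing z (- x) = - pairing z x.
Proof. by rewrite pairingC pairingNl pairingC. Qed.
Lemma pairingBr (x y z : V) : pairing z (x - y) = pairing z x - pairing z y.
Proof. by rewrite pairingDr pairingNr. Qed.
Lemma pairing0r (z : V) : pairing z 0 = 0.
Proof. by rewrite pairingC pairing0l. Qed.

Lemma pairing_sumr (x : V) I r (P : pred I) (F : I -> V) :
  pairing x (\sum_(i <- r | P i) F i) = \sum_(i <- r | P i) pairing x (F i).
Proof. by elim/big_rec2: _ => [|i y1 y2 _ <-]; rewrite ?pairing0r ?pairingDr. Qed.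

Lemma pairing_injl (x y : V) : (forall w, pairing x w = pairing y w) -> x = y.
Proof. by move=> h; apply/rowP => k; rewrite -!pairing_evr. Qed.
Lemma pairing_injr (x y : V) : (forall w, pairing w x = pairing w y) -> x = y.
Proof. by move=> h; apply/rowP => k; rewrite -!pairing_evl. Qed.
Lemma pairing_eq0 (v : V) : (forall w, pairing v w = 0) -> v = 0.
Proof. by move=> h; apply: pairing_injl => w; rewrite h pairing0l. Qed.

Lemma linear_fun0 (F : V -> V) : linear F -> F 0 = 0.
Proof.
move=> hF; have := hF 1 0 0; rewrite !scale1r addr0 => /eqP.
by rewrite -subr_eq0 opprD addrA subrr sub0r oppr_eq0 => /eqP.
Qed.

Lemma linear_expand (F : V -> V) v : linear F -> F v = \sum_k v 0 k *: F (e k).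
Proof.
move=> hF; rewrite {1}(row_sum_delta v).
by elim/big_rec2: _ => [|k y1 y2 _ <-]; rewrite ?linear_fun0 ?hF.
Qed.

Lemma pairing_dual_rep (U : lmodType K) (th : U -> V -> V) :
  is_linear_rep th -> forall a (v w : V), pairing (dual_rep th a v) w = - pairing v (th a w).
Proof.
move=> [_ hth] a v w; have {hth} hth := hth a.
rewrite (linear_expand w hth) pairing_sumr -sumrN.
apply: eq_bigr => k _; rewrite pairingZr /pairing mulr_sumr -sumrN mxE mulNr mulr_suml.
by rewrite -sumrN; apply: eq_bigr => i _; ring.
Qed.

Lemma pairing_dual_repC (U : lmodType K) (th : U -> V -> V) :
  is_linear_rep th -> forall a (v w : V), pairing (th a w) v = - pairing w (dual_rep th a v).
Proof. by move=> hth a v w; rewrite (pairingC w) (pairing_dual_rep hth) opprK pairingC. Qed.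

Lemma dual_rep_linear_rep (U : lmodType K) (th : U -> V -> V) :
  is_linear_rep th -> is_linear_rep (dual_rep th).
Proof.
move=> hth; split=> * /=; apply: pairing_injl => z.
all: rewrite pairingDl pairingZl !(pairing_dual_rep hth) ?(repDl hth, repZl hth).
all: by rewrite ?(pairingDl, pairingZl, pairingDr, pairingZr); ring.
Qed.
End Pairing.

Section CoadjointRep.
Variables (K : fieldType) (n : nat) (br m : 'rV[K]_n -> 'rV[K]_n -> 'rV[K]_n).
Hypotheses (two_neq0 : (2%:R : K) != 0) (H : is_malcev_poisson br m).

Let Hb := mp_br_rep H.
Let Hm := mp_mul_rep H.

Lemma coadjoint_MP_rep : is_MP_rep br m (dual_rep br) (fun x v => - dual_rep m x v).
Proof.
have mu_rep := linear_rep_oppr (dual_rep_linear_rep Hm).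
split; [split; first exact: dual_rep_linear_rep|split; [split|split]] => // x y *;
  apply: pairing_injl => w;
  rewrite ?(pairingDl, pairingBl, pairingNl, pairing_dual_rep Hb, pairing_dual_rep Hm, opprK).
- rewrite (malcev_coadjoint (mp_malcev H) two_neq0).
  by rewrite ?(pairingDr, pairingNr); ring.
- by rewrite (mp_mulC H x) (mp_mulA H).
- by rewrite (mp_br_mull H) pairingDr opprD.
- by rewrite (mp_leibniz H) pairingDr; ring.
Qed.
End CoadjointRep.

Section TensorDuality.
Variables (K : fieldType) (n : nat).
Local Notation V := 'rV[K]_n.
Local Notation e := (@ev K n).
Implicit Types (D : 'I_n -> tensor2 K n) (T : tensor2 K n).

Definition pairing2 T (xi eta : V) : K := \sum_a \sum_b xi 0 a * eta 0 b * T a b.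

Lemma pairing2_ev T a b : pairing2 T (e a) (e b) = T a b.
Proof.
rewrite /pairing2; under eq_bigr => i _ do under eq_bigr => j _ do rewrite -mulrA.
by under eq_bigr => i _ do rewrite -mulr_sumr sum_evl; rewrite sum_evl.
Qed.

Lemma tensor2_eq0P T : (forall a b, T a b = 0) <-> (forall xi eta, pairing2 T xi eta = 0).
Proof.
split=> h; last by move=> a b; rewrite -pairing2_ev.
by move=> xi eta; rewrite /pairing2 big1 // => a _; rewrite big1 // => b _; rewrite h mulr0.
Qed.

Lemma tensor_condition_form (T : V -> V -> tensor2 K n) (F : V -> V -> V -> V -> K) :
  (forall x y xi eta, pairing2 (T x y) xi eta = F x y xi eta) ->
  (forall x y a b, T x y a b = 0) <-> (forall x y xi eta, F x y xi eta = 0).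
Proof.
move=> TF; split=> h x y.
  by move=> xi eta; rewrite -TF; move: xi eta; apply/tensor2_eq0P; exact: h.
by apply/tensor2_eq0P => xi eta; rewrite TF.
Qed.

Lemma pairing2D T T' xi eta :
  pairing2 (fun a b => T a b + T' a b) xi eta = pairing2 T xi eta + pairing2 T' xi eta.
Proof.
rewrite /pairing2 -big_split; apply: eq_bigr => a _; rewrite -big_split.
by apply: eq_bigr => b _; rewrite mulrDr.
Qed.

Lemma pairing2N T xi eta : pairing2 (fun a b => - T a b) xi eta = - pairing2 T xi eta.
Proof.
rewrite /pairing2 -sumrN; apply: eq_bigr => a _; rewrite -sumrN.
by apply: eq_bigr => b _; rewrite mulrN.
Qed.

Lemma pairing2B T T' xi eta :
  pairing2 (fun a b => T a b - T' a b) xi eta = pairing2 T xi eta - pairing2 T' xi eta.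
Proof. by rewrite pairing2D pairing2N. Qed.

Lemma dual_opE D xi eta k : dual_op D xi eta 0 k = pairing2 (D k) xi eta.
Proof. by rewrite mxE. Qed.

Lemma dual_op_evE D k i j : D k i j = dual_op D (e i) (e j) 0 k.
Proof. by rewrite dual_opE pairing2_ev. Qed.

Lemma cop_pairing D (x : V) i j : cop D x i j = pairing x (dual_op D (e i) (e j)).
Proof. by apply: eq_bigr => k _; rewrite dual_op_evE. Qed.

Lemma dual_op_bilinear D : bilinear_op (dual_op D).
Proof.
split=> a u v w; apply/rowP => k; rewrite !mxE mulr_sumr -big_split /=.
all: apply: eq_bigr => i _; rewrite mulr_sumr -big_split; apply: eq_bigr => j _.
all: by rewrite !mxE /=; ring.
Qed.

Lemma pairing2_cop D (x : V) xi eta : pairing2 (cop D x) xi eta = pairing x (dual_op D xi eta).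
Proof.
rewrite /pairing2 /cop /pairing.
under eq_bigr => a _ do under eq_bigr => b _ do rewrite mulr_sumr.
under eq_bigr => a _ do rewrite exchange_big /=.
rewrite exchange_big /=; apply: eq_bigr => k _; rewrite dual_opE mulr_sumr.
by apply: eq_bigr => a _; rewrite mulr_sumr; apply: eq_bigr => b _; ring.
Qed.

Definition transpose_map (f : V -> V) (xi : V) : V := \row_i pairing (f (e i)) xi.

Lemma transpose_dual_rep (U : Type) (th : U -> V -> V) a xi :
  transpose_map (th a) xi = - dual_rep th a xi.
Proof. by apply/rowP => k; rewrite !mxE opprK pairingC. Qed.

Lemma pairing2_map_l f T xi eta :
  pairing2 (map_l f T) xi eta = pairing2 T (transpose_map f xi) eta.
Proof.
rewrite /pairing2 /map_l.
under eq_bigr => a _ do under eq_bigr => b _ do rewrite mulr_sumr.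
under eq_bigr => a _ do rewrite exchange_big /=.
rewrite exchange_big /=; apply: eq_bigr => i _.
rewrite exchange_big /=; apply: eq_bigr => b _.
by rewrite mxE /pairing !mulr_suml; apply: eq_bigr => a _; ring.
Qed.

Lemma pairing2_map_r f T xi eta :
  pairing2 (map_r f T) xi eta = pairing2 T xi (transpose_map f eta).
Proof.
rewrite /pairing2 /map_r; apply: eq_bigr => a _.
under eq_bigr => b _ do rewrite mulr_sumr.
rewrite exchange_big /=; apply: eq_bigr => j _.
by rewrite mxE /pairing mulr_sumr mulr_suml; apply: eq_bigr => b _; ring.
Qed.

Lemma sum_pairing_linear (F : V -> V) (x v : V) :
  linear F -> \sum_j pairing x (F (e j)) * v 0 j = pairing x (F v).
Proof.
move=> hF; rewrite [in RHS](linear_expand v hF) pairing_sumr.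
by apply: eq_bigr => j _; rewrite pairingZr mulrC.
Qed.

End TensorDuality.

Section DualCoalgebra.
Variables (K : fieldType) (n : nat) (Dl Dt : 'I_n -> tensor2 K n).
Local Notation e := (@ev K n).
Local Notation brd := (dual_op Dt).
Local Notation md := (dual_op Dl).

Lemma id_cop_pairing (D D' : 'I_n -> tensor2 K n) x a b c :
  id_cop D' (cop D x) a b c = pairing x (dual_op D (e a) (dual_op D' (e b) (e c))).
Proof.
rewrite /id_cop; under eq_bigr => j _ do rewrite cop_pairing dual_op_evE.
exact: (sum_pairing_linear _ _ (bilinear_linearr _ (dual_op_bilinear _))).
Qed.

Lemma cop_id_pairing (D D' : 'I_n -> tensor2 K n) x a b c :
  cop_id D' (cop D x) a b c = pairing x (dual_op D (dual_op D' (e a) (e b)) (e c)).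
Proof.
rewrite /cop_id; under eq_bigr => j _ do rewrite cop_pairing dual_op_evE.
exact: (sum_pairing_linear _ _ (bilinear_linearl _ (dual_op_bilinear _))).
Qed.

Lemma cop_cop_pairing x a b c d :
  cop_cop Dt (cop Dt x) a b c d = pairing x (brd (brd (e a) (e b)) (brd (e c) (e d))).
Proof.
rewrite /cop_cop.
under eq_bigr => i _ do under eq_bigr => j _ do
  rewrite cop_pairing (dual_op_evE Dt i) (dual_op_evE Dt j) mulrAC.
under eq_bigr => i _ do
  rewrite -mulr_suml (sum_pairing_linear _ _ (bilinear_linearr _ (dual_op_bilinear _))).
exact: (sum_pairing_linear _ _ (bilinear_linearl _ (dual_op_bilinear _))).
Qed.

Lemma cop_id_id_pairing x a b c d :
  cop_id_id Dt (cop_id Dt (cop Dt x)) a b c d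
  = pairing x (brd (brd (brd (e a) (e b)) (e c)) (e d)).
Proof.
rewrite /cop_id_id; under eq_bigr => i _ do rewrite cop_id_pairing (dual_op_evE Dt i).
apply: (sum_pairing_linear (F := fun u => brd (brd u (e c)) (e d))) => s u v.
by rewrite !(bilinear_linearl _ (dual_op_bilinear _)).
Qed.

Lemma dual_MP_coalgebra : (2%:R : K) != 0 ->
  is_malcev_poisson brd md -> MP_coalgebra Dl Dt.
Proof.
move=> two_neq0 HB; split; first by move=> x a b; rewrite !cop_pairing (mp_mulC HB).
split; first by move=> x a b c; rewrite id_cop_pairing cop_id_pairing (mp_mulA HB).
split; first by move=> x a b; rewrite !cop_pairing (mp_brC HB) pairingNr.
split=> [x a b c d /= | x a b c].
  rewrite /id_tau_id /sigma4 cop_cop_pairing !cop_id_id_pairing.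
  by rewrite (malcev_sagle (mp_malcev HB) two_neq0) !pairingDr; ring.
rewrite /tau_id id_cop_pairing cop_id_pairing id_cop_pairing (mp_leibniz HB) pairingDr.
by ring.
Qed.
End DualCoalgebra.

Section CoadjointDouble.
Variables (K : fieldType) (n : nat).
Local Notation V := 'rV[K]_n.
Variables (br m : V -> V -> V) (Dl Dt : 'I_n -> tensor2 K n).
Hypotheses (HA : is_malcev_poisson br m) (HB : is_malcev_poisson (dual_op Dt) (dual_op Dl)).
Local Notation brd := (dual_op Dt).
Local Notation md := (dual_op Dl).
Local Notation r1 := (dual_rep br).
Local Notation mu1 := (fun x xi => - dual_rep m x xi).
Local Notation r2 := (dual_rep brd).
Local Notation mu2 := (fun xi x => - dual_rep md xi x).
Local Notation Bd := (mp_bracket br brd r1 r2).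
Local Notation Pd := (mp_product m md mu1 mu2).

Let Lb := mp_br_rep HA.
Let Lm := mp_mul_rep HA.
Let Lbd := bilinear_linear_rep (dual_op_bilinear Dt).
Let Lmd := bilinear_linear_rep (dual_op_bilinear Dl).
Let Lr1 := dual_rep_linear_rep Lb.
Let Lmu1 := dual_rep_linear_rep Lm.
Let Lr2 := dual_rep_linear_rep Lbd.
Let Lmu2 := dual_rep_linear_rep Lmd.

Local Ltac expand := rewrite /omega_d /= ?(repE Lb, repE Lm, repE Lbd, repE Lmd,
  repE Lr1, repE Lmu1, repE Lr2, repE Lmu2, pairingDl, pairingDr, pairingBl, pairingBr,
  pairingNl, pairingNr, pairing0l, pairing0r, opprK, opprD, oppr0, addr0, add0r, subr0, sub0r).

(* The bialgebra axiom (c) and the two identities of (e), paired with xi (x) eta. *)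
Definition coprod_mul_form x y xi eta := pairing (m x y) (md xi eta)
  - pairing y (md (mu1 x xi) eta) - pairing x (md xi (mu1 y eta)).
Definition cobr_mul_form x y xi eta := pairing (m x y) (brd xi eta)
  - pairing x (md (r1 y xi) eta) + pairing y (brd xi (dual_rep m x eta))
  - pairing y (md (r1 x xi) eta) + pairing x (brd xi (dual_rep m y eta)).
Definition coprod_br_form x y xi eta := pairing (br x y) (md xi eta)
  + pairing x (brd (dual_rep m y xi) eta) + pairing y (md xi (r1 x eta))
  - pairing x (brd xi (dual_rep m y eta)) + pairing y (md (r1 x xi) eta).

Lemma pairing2_coprod_mul x y xi eta :
  pairing2 (fun a b => cop Dl (m x y) a b -
    (map_l (m x) (cop Dl y) a b + map_r (m y) (cop Dl x) a b)) xi eta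
  = coprod_mul_form x y xi eta.
Proof.
by rewrite pairing2B pairing2D pairing2_map_l pairing2_map_r !pairing2_cop
  !transpose_dual_rep opprD addrA.
Qed.

Lemma pairing2_cobr_mul x y xi eta :
  pairing2 (fun a b => cop Dt (m x y) a b + map_l (br y) (cop Dl x) a b
     - map_r (m x) (cop Dt y) a b + map_l (br x) (cop Dl y) a b
     - map_r (m y) (cop Dt x) a b) xi eta = cobr_mul_form x y xi eta.
Proof.
rewrite !(pairing2B, pairing2D) !(pairing2_map_l, pairing2_map_r) !pairing2_cop.
by rewrite !transpose_dual_rep; expand.
Qed.

Lemma pairing2_coprod_br x y xi eta :
  pairing2 (fun a b => cop Dl (br x y) a b - map_l (m y) (cop Dt x) a b
     - map_r (br x) (cop Dl y) a b + map_r (m y) (cop Dt x) a b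
     - map_l (br x) (cop Dl y) a b) xi eta = coprod_br_form x y xi eta.
Proof.
rewrite !(pairing2B, pairing2D) !(pairing2_map_l, pairing2_map_r) !pairing2_cop.
by rewrite !transpose_dual_rep /coprod_br_form; expand; ring.
Qed.

(* Tested against a vector, each matched-pair defect of the coadjoint data is one
   of the three forms, up to sign; suffix _l for the actions of A, _r for those
   of A^* on A. *)
Lemma pairing_mu_mul_defect_l x y xi eta :
  pairing (mu_mul_defect md mu1 mu2 x xi eta) y = coprod_mul_form x y xi eta.
Proof.
rewrite /mu_mul_defect /coprod_mul_form; expand.
rewrite !(pairing_dual_rep Lm) (mp_mulC HA (dual_rep md xi x)) (pairingC eta).
rewrite (pairing_dual_repC Lm) (pairing_dual_rep Lmd) !(pairingC (md _ _)).
by ring.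
Qed.

Lemma pairing_mu_mul_defect_r x y xi eta :
  pairing (mu_mul_defect m mu2 mu1 xi x y) eta = coprod_mul_form x y xi eta.
Proof.
rewrite /mu_mul_defect /coprod_mul_form; expand; rewrite !(pairing_dual_rep Lmd).
rewrite (mp_mulC HA (dual_rep md xi x)) (pairing_dual_repC Lm y) (pairing_dual_rep Lmd).
by ring.
Qed.

Lemma pairing_r_mul_defect_l x y xi eta :
  pairing (r_mul_defect md r1 mu1 r2 x xi eta) y = - coprod_br_form x y xi eta.
Proof.
rewrite /r_mul_defect /coprod_br_form; expand.
rewrite !(pairing_dual_rep Lb, pairing_dual_rep Lm).
rewrite !(mp_mulC HA (r2 _ _)) (pairingC eta) (pairingC xi) !(pairing_dual_repC Lm).
rewrite !(pairing_dual_rep Lbd) (mp_brC HB eta) !(pairingC (md _ _)); expand.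
by ring.
Qed.

Lemma pairing_r_mul_defect_r x y xi eta :
  pairing (r_mul_defect m r2 mu2 r1 xi x y) eta = - cobr_mul_form x y xi eta.
Proof.
rewrite /r_mul_defect /cobr_mul_form; expand; rewrite !(pairing_dual_rep Lmd).
rewrite (mp_mulC HA (r2 xi x)) !(pairing_dual_repC Lm _ eta) !(pairing_dual_rep Lbd); expand.
by ring.
Qed.

Lemma pairing_br_mu_defect_l x y xi eta :
  pairing (br_mu_defect br m r1 mu1 r2 mu2 x xi y) eta = - coprod_br_form x y xi eta.
Proof.
rewrite /br_mu_defect /coprod_br_form; expand.
rewrite !(pairing_dual_rep Lbd, pairing_dual_rep Lmd).
rewrite (mp_mulC HA (r2 xi x)) !(pairing_dual_repC Lm _ eta, pairing_dual_repC Lb _ eta).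
rewrite !(pairing_dual_rep Lbd, pairing_dual_rep Lmd); expand.
by ring.
Qed.

Lemma pairing_br_mu_defect_r x y xi eta :
  pairing (br_mu_defect brd md r2 mu2 r1 mu1 xi x eta) y = - cobr_mul_form x y xi eta.
Proof.
rewrite /br_mu_defect /cobr_mul_form; expand.
rewrite !(pairing_dual_rep Lmd, pairing_dual_rep Lm, pairing_dual_rep Lb, pairing_dual_rep Lbd).
rewrite (mp_brC HA (dual_rep md eta x)) (mp_mulC HA (r2 xi x)) (pairingC eta) (pairingC xi).
expand; rewrite (pairing_dual_repC Lb y) (pairing_dual_repC Lm y).
rewrite !(pairing_dual_rep Lmd, pairing_dual_rep Lbd).
rewrite (mp_mulC HB eta) !(pairingC (brd _ _)) !(pairingC (md _ _) y).
by ring.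
Qed.

Lemma coprod_mul_conditionE :
  (forall x y a b, cop Dl (m x y) a b = map_l (m x) (cop Dl y) a b + map_r (m y) (cop Dl x) a b)
  <-> (forall x y xi eta, coprod_mul_form x y xi eta = 0).
Proof.
rewrite -(tensor_condition_form pairing2_coprod_mul).
by split=> h x y a b; [rewrite h subrr | apply/subr0_eq/h].
Qed.

Lemma cobr_mul_conditionE :
  (forall x y a b, cop Dt (m x y) a b + map_l (br y) (cop Dl x) a b
     - map_r (m x) (cop Dt y) a b + map_l (br x) (cop Dl y) a b
     - map_r (m y) (cop Dt x) a b = 0)
  <-> (forall x y xi eta, cobr_mul_form x y xi eta = 0).
Proof. exact: tensor_condition_form pairing2_cobr_mul. Qed.

Lemma coprod_br_conditionE :
  (forall x y a b, cop Dl (br x y) a b - map_l (m y) (cop Dt x) a b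
     - map_r (br x) (cop Dl y) a b + map_r (m y) (cop Dt x) a b
     - map_l (br x) (cop Dl y) a b = 0)
  <-> (forall x y xi eta, coprod_br_form x y xi eta = 0).
Proof. exact: tensor_condition_form pairing2_coprod_br. Qed.

Lemma dual_matched_compatE : matched_compat br m brd md r1 mu1 r2 mu2 <->
  [/\ forall x y xi eta, coprod_mul_form x y xi eta = 0,
      forall x y xi eta, cobr_mul_form x y xi eta = 0 &
      forall x y xi eta, coprod_br_form x y xi eta = 0].
Proof.
have pairing_defects := (pairing_mu_mul_defect_l, pairing_mu_mul_defect_r,
  pairing_r_mul_defect_l, pairing_r_mul_defect_r, pairing_br_mu_defect_l, pairing_br_mu_defect_r).
split=> [[[c3 c11 _] [_ c10 _]] | [hc he1 he2]].
  split=> x y xi eta; apply/oppr_inj; rewrite oppr0.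
  - by rewrite -pairing_mu_mul_defect_l c3 pairing0l oppr0.
  - by rewrite -pairing_r_mul_defect_r c10 pairing0l.
  - by rewrite -pairing_r_mul_defect_l c11 pairing0l.
by split; split=> *; apply: pairing_eq0 => w; rewrite pairing_defects ?(hc, he1, he2) ?oppr0.
Qed.

Lemma MP_bialgebraE : (2%:R : K) != 0 ->
  MP_bialgebra br m Dl Dt <->
  matched_compat br m brd md r1 mu1 r2 mu2 /\ is_malcev (mp_bracket br brd r1 r2).
Proof.
move=> two_neq0; split.
  case=> _ [_ [hc [[_ [_ hB]] [he1 he2]]]]; split=> //; apply/dual_matched_compatE.
  by split; [apply/coprod_mul_conditionE | apply/cobr_mul_conditionE |
    apply/coprod_br_conditionE].
case=> /dual_matched_compatE [hc he1 he2] hB.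
have [[mr1 _] [mr2 _]] := (coadjoint_MP_rep two_neq0 HA, coadjoint_MP_rep two_neq0 HB).
split=> //; split; first exact: dual_MP_coalgebra.
split; first exact/coprod_mul_conditionE.
split; first by split; last split.
by split; [apply/cobr_mul_conditionE | apply/coprod_br_conditionE].
Qed.

Lemma omega_d_invariant_bracket u v w : omega_d (Bd u v) w = omega_d u (Bd v w).
Proof.
case: u v w => [x xi] [y eta] [z zeta]; expand.
rewrite !(pairing_dual_rep Lbd) !(pairingC _ (r1 _ _)) !(pairing_dual_rep Lb).
rewrite !(pairingC _ (br _ _)) (mp_brC HA y x) (mp_brC HA z x).
by rewrite (mp_brC HB eta xi) (mp_brC HB zeta xi); expand; ring.
Qed.

Lemma omega_d_invariant_product u v w : omega_d (Pd u v) w = omega_d u (Pd v w).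
Proof.
case: u v w => [x xi] [y eta] [z zeta]; expand.
rewrite !(pairing_dual_rep Lmd) !(pairingC _ (dual_rep m _ _)) !(pairing_dual_rep Lm).
rewrite !(pairingC _ (m _ _)) (mp_mulC HA y x) (mp_mulC HA z x).
by rewrite (mp_mulC HB eta xi) (mp_mulC HB zeta xi); expand; ring.
Qed.

Lemma dual_double_Manin : is_malcev_poisson Bd Pd -> std_Manin_triple br m brd md.
Proof.
move=> H; exists Bd, Pd; split=> //.
do 4?[split; first by move=> *; apply: injective_projections; expand].
by split; [exact: omega_d_invariant_product | exact: omega_d_invariant_bracket].
Qed.

Section Uniqueness.
Variables B P : V * V -> V * V -> V * V.
Hypotheses (HBP : is_malcev_poisson B P).
Hypotheses (B_A : forall x y, B (x, 0) (y, 0) = (br x y, 0))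
  (P_A : forall x y, P (x, 0) (y, 0) = (m x y, 0))
  (B_D : forall xi eta, B (0, xi) (0, eta) = (0, brd xi eta))
  (P_D : forall xi eta, P (0, xi) (0, eta) = (0, md xi eta))
  (P_inv : forall u v w, omega_d (P u v) w = omega_d u (P v w))
  (B_inv : forall u v w, omega_d (B u v) w = omega_d u (B v w)).

Let omega_d_l (u : V * V) zeta : omega_d u (0, zeta) = pairing u.1 zeta.
Proof. by rewrite /omega_d pairing0l addr0. Qed.
Let omega_d_r (u : V * V) z : omega_d u (z, 0) = pairing z u.2.
Proof. by rewrite /omega_d pairing0r add0r. Qed.

Lemma Manin_bracket_mixed x eta : B (x, 0) (0, eta) = (- r2 eta x, r1 x eta).
Proof.
apply: injective_projections => /=.
  apply: pairing_injl => zeta; rewrite -omega_d_l B_inv B_D omega_d_l.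
  by rewrite pairingNl (pairing_dual_rep Lbd) opprK.
apply: pairing_injr => z; rewrite (mp_brC HBP) /= pairingNr -omega_d_r B_inv B_A.
by rewrite /omega_d /= pairing0l add0r (pairing_dual_repC Lb) opprK.
Qed.

Lemma Manin_product_mixed x eta : P (x, 0) (0, eta) = (mu2 eta x, mu1 x eta).
Proof.
apply: injective_projections => /=.
  apply: pairing_injl => zeta; rewrite -omega_d_l P_inv P_D omega_d_l.
  by rewrite pairingNl (pairing_dual_rep Lmd) opprK.
apply: pairing_injr => z.
rewrite -omega_d_r (mp_mulC HBP) P_inv P_A /omega_d /= pairing0l add0r.
by rewrite pairingNr (pairing_dual_repC Lm).
Qed.

Lemma Manin_bracket_unique u v : B u v = Bd u v.
Proof.
have LB := mp_br_rep HBP.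
rewrite (pair_split u) (pair_split v) !(repDl LB, repDr LB) (mp_brC HBP (0, u.2)).
rewrite !Manin_bracket_mixed B_A B_D.
by case: u v => [x xi] [y eta]; apply: injective_projections; expand;
  apply/rowP => j; rewrite !mxE; ring.
Qed.

Lemma Manin_product_unique u v : P u v = Pd u v.
Proof.
have LP := mp_mul_rep HBP.
rewrite (pair_split u) (pair_split v) !(repDl LP, repDr LP) (mp_mulC HBP (0, u.2)).
rewrite !Manin_product_mixed P_A P_D.
by case: u v => [x xi] [y eta]; apply: injective_projections; expand;
  apply/rowP => j; rewrite !mxE; ring.
Qed.
End Uniqueness.

Lemma Manin_double_MP : std_Manin_triple br m brd md -> is_malcev_poisson Bd Pd.
Proof.
case=> B [P [HBP [B_A [P_A [B_D [P_D [P_inv B_inv]]]]]]].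
suff [<- <-] : B = Bd /\ P = Pd by [].
split; apply: functional_extensionality => u; apply: functional_extensionality => v.
  exact: (Manin_bracket_unique HBP B_A B_D B_inv).
exact: (Manin_product_unique HBP P_A P_D P_inv).
Qed.
End CoadjointDouble.

Theorem mainTheorem4 (K : closedFieldType) (charK : [pchar K] =i pred0) (n : nat)
    (br m : 'rV[K]_n -> 'rV[K]_n -> 'rV[K]_n)
    (Dl Dt : 'I_n -> 'I_n -> 'I_n -> K) :
  is_malcev_poisson br m ->
  is_malcev_poisson (dual_op Dt) (dual_op Dl) ->
  (MP_bialgebra br m Dl Dt <->
   matched_pair br m (dual_op Dt) (dual_op Dl)
     (dual_rep br) (fun x xi => - dual_rep m x xi)
     (dual_rep (dual_op Dt)) (fun xi x => - dual_rep (dual_op Dl) xi x)) /\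
  (matched_pair br m (dual_op Dt) (dual_op Dl)
     (dual_rep br) (fun x xi => - dual_rep m x xi)
     (dual_rep (dual_op Dt)) (fun xi x => - dual_rep (dual_op Dl) xi x) <->
   std_Manin_triple br m (dual_op Dt) (dual_op Dl)).
Proof.
move=> HA HB.
have two_neq0 : (2%:R : K) != 0 by move/pcharf0P: charK => ->.
have [R1 R2] := (coadjoint_MP_rep two_neq0 HA, coadjoint_MP_rep two_neq0 HB).
have matched_pair_compat := matched_pairE R1 R2.
split.
  exact: iff_trans (MP_bialgebraE HA HB two_neq0) (iff_sym matched_pair_compat).
apply: iff_trans matched_pair_compat _.
apply: iff_trans (iff_sym (double_MPE HA HB R1 R2)) _.
by split; [exact: dual_double_Manin | exact: Manin_double_MP].
Qed.
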